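(* The randomized mechanism that always outputs the uniform distribution over $[0,1]$ is an $\mathcal O(\sqrt n)$-approximation for the minimum utility: there is an absolute constant $C$ such that for every $n\ge 2$ and every profile $\mathbf x\in[0,1]^n$, $$\max_{z\in[0,1]}\min_i|x_i-z|\le C\sqrt n\;\mathbb E_{y\sim U[0,1]}\Big[\min_i |x_i-y|\Big].$$
   Context: Agents $i=1,\dots,n$ at locations $x_i\in[0,1]$ receive utility $|x_i-y|$ from an obnoxious facility at $y\in[0,1]$. The minimum-utility objective (the $L_{-\infty}$ social utility) of $y$ is $\min_i|x_i-y|$; a randomized mechanism's value is the expectation of this objective over its output distribution. *)

From Stdlib Require Import Reals.
From Coquelicot Require Import Coquelicot.
Open Scope R_scope.

Fixpoint minf (f : nat -> R) (m : nat) : R :=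
  match m with
  | O => f O
  | S k => Rmin (minf f k) (f (S k))
  end.

(* Minimum-utility (L_{-oo} social utility) of facility location y for the
   profile x_0, ..., x_{n-1}: min_i |x_i - y|  (meaningful for n >= 1). *)
Definition min_util (n : nat) (x : nat -> R) (y : R) : R :=
  minf (fun i => Rabs (x i - y)) (n - 1)%nat.

(* Expected minimum utility of the uniform mechanism: E_{y ~ U[0,1]} [min_i |x_i - y|]
   = integral over [0,1] of the objective (density 1). *)
Definition uniform_value (n : nat) (x : nat -> R) : R :=
  RInt (fun y => min_util n x y) 0 1.

(* Let f(y) = min_i |x_i - y|, I = int_0^1 f and d = f(z).  Since f is
   1-Lipschitz it dominates the tent of height d centred at z, and one half of
   that tent lies in [0,1] because x_0 in [0,1] is at distance >= d from z;
   hence d^2/2 <= I.  On the other hand, for every t >= 0,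
   f(y) >= t - sum_i max(0, t - |y - x_i|), and integrating gives
   I >= t - n t^2, i.e. I >= 1/(4n) for t = 1/(2n).  Therefore
   d^2 <= 2I <= 8 n I^2, so d <= 3 sqrt(n) I. *)

From Stdlib Require Import Reals Lra Lia.
From Coquelicot Require Import Coquelicot.
Open Scope R_scope.

Lemma continuous_Rmin (f g : R -> R) (y : R) :
  continuous f y -> continuous g y -> continuous (fun y => Rmin (f y) (g y)) y.
Proof.
  intros Hf Hg.
  apply (continuous_ext (fun y => (f y + g y - Rabs (f y - g y)) / 2)).
  { intros u; unfold Rmin; destruct (Rle_dec (f u) (g u)).
    - rewrite Rabs_left1; lra.
    - rewrite Rabs_right; lra. }
  apply (continuous_scal_l (fun y => f y + g y - Rabs (f y - g y)) (/ 2)).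
  apply (continuous_minus (fun y => f y + g y)).
  - now apply (continuous_plus f g).
  - now apply continuous_Rabs_comp, (continuous_minus f g).
Qed.

Lemma continuous_Rmax (f g : R -> R) (y : R) :
  continuous f y -> continuous g y -> continuous (fun y => Rmax (f y) (g y)) y.
Proof.
  intros Hf Hg.
  apply (continuous_ext (fun y => f y + g y - Rmin (f y) (g y))).
  { intros u; unfold Rmax, Rmin; destruct (Rle_dec (f u) (g u)); lra. }
  apply (continuous_minus (fun y => f y + g y)).
  - now apply (continuous_plus f g).
  - now apply continuous_Rmin.
Qed.

Lemma continuous_dist (a y : R) : continuous (fun y => Rabs (y - a)) y.
Proof.
  apply continuous_Rabs_comp, (continuous_minus (fun y => y) (fun _ => a)).
  - apply continuous_id.
  - apply continuous_const.
Qed.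

Lemma continuous_minf (g : nat -> R -> R) (m : nat) (y : R) :
  (forall i, continuous (g i) y) -> continuous (fun y => minf (fun i => g i y) m) y.
Proof.
  intros Hg; induction m as [|m IH]; simpl.
  - apply Hg.
  - now apply (continuous_Rmin (fun y => minf (fun i => g i y) m)).
Qed.

Lemma continuous_sum_f_R0 (g : nat -> R -> R) (m : nat) (y : R) :
  (forall i, continuous (g i) y) -> continuous (fun y => sum_f_R0 (fun i => g i y) m) y.
Proof.
  intros Hg; induction m as [|m IH]; simpl.
  - apply Hg.
  - now apply (continuous_plus (fun y => sum_f_R0 (fun i => g i y) m)).
Qed.

Lemma RInt_affine (p q u v : R) :
  RInt (fun y => p * y + q) u v = p * (v ^ 2 - u ^ 2) / 2 + q * (v - u).
Proof.
  apply is_RInt_unique.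
  replace (p * (v ^ 2 - u ^ 2) / 2 + q * (v - u))
    with (minus ((fun y => p * y ^ 2 / 2 + q * y) v) ((fun y => p * y ^ 2 / 2 + q * y) u)).
  2: { unfold minus, plus, opp; simpl. field. }
  apply (is_RInt_derive (V := R_CompleteNormedModule) (fun y => p * y ^ 2 / 2 + q * y)).
  - intros y _; auto_derive; auto; field.
  - intros y _; apply (continuous_plus (fun y => p * y)).
    + apply (continuous_mult (fun _ => p) (fun y => y)); [apply continuous_const | apply continuous_id].
    + apply continuous_const.
Qed.

Lemma RInt_nonneg_subinterval (f : R -> R) (u u' v' v : R) :
  u <= u' <= v' -> v' <= v -> ex_RInt f u v -> (forall y, u < y < v -> 0 <= f y) ->
  RInt f u' v' <= RInt f u v.
Proof.
  intros Hu Hv Hf Hpos.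
  assert (Hf1 : ex_RInt f u u') by (apply (ex_RInt_Chasles_1 f u u' v); auto; lra).
  assert (Hf2 : ex_RInt f u' v) by (apply (ex_RInt_Chasles_2 f u u' v); auto; lra).
  assert (Hf3 : ex_RInt f u' v') by (apply (ex_RInt_Chasles_1 f u' v' v); auto; lra).
  assert (Hf4 : ex_RInt f v' v) by (apply (ex_RInt_Chasles_2 f u' v' v); auto; lra).
  rewrite <- (RInt_Chasles f u u' v), <- (RInt_Chasles f u' v' v) by assumption.
  assert (0 <= RInt f u u') by (apply RInt_ge_0; [lra | exact Hf1 | intros; apply Hpos; lra]).
  assert (0 <= RInt f v' v) by (apply RInt_ge_0; [lra | exact Hf4 | intros; apply Hpos; lra]).
  unfold plus; simpl; lra.
Qed.

Definition tent (a t y : R) : R := Rmax 0 (t - Rabs (y - a)).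

Lemma tent_ge0 (a t y : R) : 0 <= tent a t y.
Proof. apply Rmax_l. Qed.

Lemma continuous_tent (a t y : R) : continuous (tent a t) y.
Proof.
  apply (continuous_Rmax (fun _ => 0)); [apply continuous_const |].
  apply (continuous_minus (fun _ => t)); [apply continuous_const | apply continuous_dist].
Qed.

Lemma ex_RInt_tent (a t u v : R) : ex_RInt (tent a t) u v.
Proof. apply (ex_RInt_continuous (V := R_CompleteNormedModule)); intros; apply continuous_tent. Qed.

Lemma RInt_tent_left (a t : R) : 0 <= t -> RInt (tent a t) (a - t) a = t ^ 2 / 2.
Proof.
  intros Ht.
  rewrite (RInt_ext _ (fun y => 1 * y + (t - a))).
  { rewrite RInt_affine; simpl; field. }
  rewrite Rmin_left, Rmax_right by lra; intros y Hy.
  unfold tent; rewrite Rabs_left, Rmax_right; lra.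
Qed.

Lemma RInt_tent_right (a t : R) : 0 <= t -> RInt (tent a t) a (a + t) = t ^ 2 / 2.
Proof.
  intros Ht.
  rewrite (RInt_ext _ (fun y => -1 * y + (a + t))).
  { rewrite RInt_affine; simpl; field. }
  rewrite Rmin_left, Rmax_right by lra; intros y Hy.
  unfold tent; rewrite Rabs_right, Rmax_right; lra.
Qed.

Lemma RInt_tent_vanish (a t u v : R) :
  u <= v -> (forall y, u < y < v -> t <= Rabs (y - a)) -> RInt (tent a t) u v = 0.
Proof.
  intros Huv Hfar.
  rewrite (RInt_ext _ (fun _ => 0)), RInt_const.
  - apply Rmult_0_r.
  - rewrite Rmin_left, Rmax_right by lra; intros y Hy.
    unfold tent; rewrite Rmax_left; [| specialize (Hfar y Hy)]; lra.
Qed.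

Lemma RInt_tent_le (a t u v : R) : 0 <= t -> u <= v -> RInt (tent a t) u v <= t ^ 2.
Proof.
  intros Ht Huv.
  set (lo := Rmin u (a - t)); set (hi := Rmax v (a + t)).
  assert (lo <= u /\ lo <= a - t) by (split; [apply Rmin_l | apply Rmin_r]).
  assert (v <= hi /\ a + t <= hi) by (split; [apply Rmax_l | apply Rmax_r]).
  apply Rle_trans with (RInt (tent a t) lo hi).
  { apply RInt_nonneg_subinterval; try lra; [apply ex_RInt_tent | intros; apply tent_ge0]. }
  rewrite <- (RInt_Chasles _ lo (a - t)), <- (RInt_Chasles _ (a - t) a),
    <- (RInt_Chasles _ a (a + t)) by apply ex_RInt_tent.
  rewrite RInt_tent_left, RInt_tent_right by lra.
  rewrite (RInt_tent_vanish a t lo), (RInt_tent_vanish a t (a + t) hi); try lra.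
  - unfold plus; simpl; lra.
  - intros y Hy; rewrite Rabs_right; lra.
  - intros y Hy; rewrite Rabs_left; lra.
Qed.

Lemma RInt_tent_ge (a t u v : R) :
  0 <= t -> (u <= a - t /\ a <= v) \/ (u <= a /\ a + t <= v) ->
  t ^ 2 / 2 <= RInt (tent a t) u v.
Proof.
  intros Ht [[Hu Hv] | [Hu Hv]].
  - rewrite <- (RInt_tent_left a t Ht).
    apply RInt_nonneg_subinterval; try lra; [apply ex_RInt_tent | intros; apply tent_ge0].
  - rewrite <- (RInt_tent_right a t Ht).
    apply RInt_nonneg_subinterval; try lra; [apply ex_RInt_tent | intros; apply tent_ge0].
Qed.

Lemma minf_ge0 (f : nat -> R) (m : nat) : (forall i, 0 <= f i) -> 0 <= minf f m.
Proof. intros Hf; induction m; simpl; [apply Hf | now apply Rmin_glb]. Qed.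

Lemma minf_le (f : nat -> R) (m i : nat) : (i <= m)%nat -> minf f m <= f i.
Proof.
  induction m as [|m IH]; intros Hi; simpl.
  - replace i with 0%nat by lia; lra.
  - destruct (Nat.eq_dec i (S m)) as [-> | Hne]; [apply Rmin_r |].
    apply Rle_trans with (minf f m); [apply Rmin_l | apply IH; lia].
Qed.

Lemma minf_le_shift (f g : nat -> R) (c : R) (m : nat) :
  (forall i, f i <= g i + c) -> minf f m <= minf g m + c.
Proof.
  intros Hfg; induction m as [|m IH]; simpl; [apply Hfg |].
  specialize (Hfg (S m)); unfold Rmin; destruct (Rle_dec _ (f (S m))), (Rle_dec _ (g (S m))); lra.
Qed.

Lemma minf_ge_sub_sum (f e : nat -> R) (t : R) (m : nat) :
  (forall i, 0 <= e i) -> (forall i, t - e i <= f i) -> t - sum_f_R0 e m <= minf f m.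
Proof.
  intros He Hf; induction m as [|m IH]; simpl; [apply Hf |].
  pose proof (cond_pos_sum e m He); pose proof (He (S m)); pose proof (Hf (S m)).
  apply Rmin_glb; lra.
Qed.

Lemma min_util_succ (m : nat) (x : nat -> R) (y : R) :
  min_util (S m) x y = minf (fun i => Rabs (x i - y)) m.
Proof. unfold min_util; now rewrite Nat.sub_1_r. Qed.

Lemma continuous_min_util (n : nat) (x : nat -> R) (y : R) : continuous (min_util n x) y.
Proof.
  apply (continuous_minf (fun i y => Rabs (x i - y))); intros i.
  apply (continuous_ext (fun y => Rabs (y - x i))); [intros; apply Rabs_minus_sym |].
  apply continuous_dist.
Qed.

Lemma ex_RInt_min_util (n : nat) (x : nat -> R) (u v : R) : ex_RInt (min_util n x) u v.
Proof.
  apply (ex_RInt_continuous (V := R_CompleteNormedModule)); intros; apply continuous_min_util.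
Qed.

Lemma min_util_ge0 (n : nat) (x : nat -> R) (y : R) : 0 <= min_util n x y.
Proof. apply minf_ge0; intros; apply Rabs_pos. Qed.

Lemma min_util_le_dist0 (n : nat) (x : nat -> R) (y : R) : min_util n x y <= Rabs (x 0%nat - y).
Proof. apply (minf_le (fun i => Rabs (x i - y))); lia. Qed.

Lemma min_util_lipschitz (n : nat) (x : nat -> R) (y z : R) :
  min_util n x z <= min_util n x y + Rabs (y - z).
Proof.
  apply minf_le_shift; intros i.
  replace (x i - z) with ((x i - y) + (y - z)) by ring; apply Rabs_triang.
Qed.

Lemma tent_le_min_util (n : nat) (x : nat -> R) (y z : R) :
  tent z (min_util n x z) y <= min_util n x y.
Proof.
  apply Rmax_lub; [apply min_util_ge0 |].
  pose proof (min_util_lipschitz n x y z); lra.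
Qed.

Lemma uniform_value_ge_sqr_half (n : nat) (x : nat -> R) (z : R) :
  0 <= x 0%nat <= 1 -> 0 <= z <= 1 -> min_util n x z ^ 2 / 2 <= uniform_value n x.
Proof.
  intros Hx Hz.
  set (d := min_util n x z).
  assert (Hd : 0 <= d <= Rabs (x 0%nat - z)) by (split; [apply min_util_ge0 | apply min_util_le_dist0]).
  apply Rle_trans with (RInt (tent z d) 0 1).
  - apply RInt_tent_ge; [lra |].
    destruct (Rle_dec (x 0%nat) z); [rewrite Rabs_left1 in Hd | rewrite Rabs_right in Hd]; lra.
  - apply RInt_le; [lra | apply ex_RInt_tent | apply ex_RInt_min_util |].
    intros y _; apply tent_le_min_util.
Qed.

Lemma RInt_sum_tents_le (x : nat -> R) (t u v : R) (m : nat) :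
  0 <= t -> u <= v -> RInt (fun y => sum_f_R0 (fun i => tent (x i) t y) m) u v <= INR (S m) * t ^ 2.
Proof.
  intros Ht Huv.
  induction m as [|m IH]; simpl sum_f_R0.
  - rewrite Rmult_1_l; now apply RInt_tent_le.
  - rewrite (RInt_plus (V := R_CompleteNormedModule) (fun y => sum_f_R0 (fun i => tent (x i) t y) m)).
    + pose proof (RInt_tent_le (x (S m)) t u v Ht Huv).
      rewrite S_INR; unfold plus; simpl in *; lra.
    + apply (ex_RInt_continuous (V := R_CompleteNormedModule)); intros.
      apply (continuous_sum_f_R0 (fun i y => tent (x i) t y)); intros; apply continuous_tent.
    + apply ex_RInt_tent.
Qed.

Lemma uniform_value_ge_sub_sqr (n : nat) (x : nat -> R) (t : R) :
  (1 <= n)%nat -> 0 <= t -> t - INR n * t ^ 2 <= uniform_value n x.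
Proof.
  intros Hn Ht; destruct n as [|m]; [lia |].
  set (tents := fun y => sum_f_R0 (fun i => tent (x i) t y) m).
  assert (Htents : ex_RInt tents 0 1).
  { apply (ex_RInt_continuous (V := R_CompleteNormedModule)); intros.
    apply (continuous_sum_f_R0 (fun i y => tent (x i) t y)); intros; apply continuous_tent. }
  assert (Hcover : forall y, t - tents y <= min_util (S m) x y).
  { intros y; rewrite min_util_succ; apply minf_ge_sub_sum; [intros; apply tent_ge0 |].
    intros i; rewrite Rabs_minus_sym; pose proof (Rmax_r 0 (t - Rabs (y - x i))); unfold tent; lra. }
  apply Rle_trans with (RInt (fun y => minus t (tents y)) 0 1).
  - rewrite (RInt_minus (V := R_CompleteNormedModule) (fun _ => t)), RInt_const.
    + pose proof (RInt_sum_tents_le x t 0 1 m Ht ltac:(lra)) as Hsum; fold tents in Hsum.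
      unfold minus, plus, opp, scal; simpl; unfold mult; simpl in *; lra.
    + apply ex_RInt_const.
    + exact Htents.
  - apply RInt_le; [lra | | apply ex_RInt_min_util | intros y _; apply Hcover].
    apply (ex_RInt_minus (V := R_CompleteNormedModule)); [apply ex_RInt_const | exact Htents].
Qed.

Lemma uniform_value_ge_inv (n : nat) (x : nat -> R) :
  (1 <= n)%nat -> / (4 * INR n) <= uniform_value n x.
Proof.
  intros Hn.
  assert (HN : 1 <= INR n) by (replace 1 with (INR 1) by reflexivity; now apply le_INR).
  replace (/ (4 * INR n)) with (/ (2 * INR n) - INR n * (/ (2 * INR n)) ^ 2) by (field; lra).
  apply uniform_value_ge_sub_sqr; [exact Hn |].
  apply Rlt_le, Rinv_0_lt_compat; lra.
Qed.

Lemma le_mul_sqrt_of_sqr_half_le (d I N : R) :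
  0 < N -> d ^ 2 / 2 <= I -> / (4 * N) <= I -> d <= 3 * sqrt N * I.
Proof.
  intros HN Hd HI.
  assert (HsN : sqrt N * sqrt N = N) by (apply sqrt_sqrt; lra).
  assert (0 <= sqrt N) by apply sqrt_pos.
  assert (Hunit : 1 <= 4 * N * I).
  { apply Rmult_le_compat_l with (r := 4 * N) in HI; [| lra].
    rewrite Rinv_r in HI; lra. }
  apply Rsqr_incr_0_var; unfold Rsqr.
  - replace (3 * sqrt N * I * (3 * sqrt N * I)) with (9 * (sqrt N * sqrt N) * I * I) by ring.
    rewrite HsN; nra.
  - apply Rmult_le_pos; [lra | nra].
Qed.

Theorem theorem5 :
  exists C : R,
    forall (n : nat) (x : nat -> R),
      (2 <= n)%nat ->
      (forall i, (i < n)%nat -> 0 <= x i <= 1) ->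
      forall z : R, 0 <= z <= 1 ->
        min_util n x z <= C * sqrt (INR n) * uniform_value n x.
Proof.
  exists 3; intros n x Hn Hx z Hz.
  apply le_mul_sqrt_of_sqr_half_le.
  - apply lt_0_INR; lia.
  - apply uniform_value_ge_sqr_half; [apply Hx; lia | exact Hz].
  - apply uniform_value_ge_inv; lia.
Qed.
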